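(* Let $T$ be a tree and let a group $\Gamma$ act on $T$ by automorphisms such that the action is minimal and strongly hyperbolic. Let $e$ be an edge of $T$ and suppose $g\in\Gamma$ fixes every point of $Z_B(e)$. Then $g$ fixes every point of $Z(e)$. In particular, the fixator subgroups in $\Gamma$ of $Z_0(e)$, of $Z_B(e)$, and of $Z(e)\cap\overline{\partial T}$ coincide.
   Context: A tree $T$ has vertex set $V$ and edge set $E$ with source/range maps $s,r$ and an inversion $e\mapsto\bar e$ ($s(\bar e)=r(e)$); $d$ is the path metric on vertices. A ray is a sequence $(r_i)_{i\ge0}$ of vertices with $d(r_i,r_{i+n})=n$; two rays are cofinal if they eventually agree up to a shift of indices; $\partial T$ is the set of cofinality classes of rays. For an edge $e$: $Z_0(e)=\{v\in V: d(v,s(e))>d(v,r(e))\}$; $Z_B(e)\subseteq\partial T$ is the set of classes of rays $(r_i)$ with $r_j=s(e), r_{j+1}=r(e)$ for some $j$; $Z(e)=Z_0(e)\cup Z_B(e)$. The shadow topology on $T\cup\partial T$ (identifying $T$ with $V$) is generated by the subbase $\{Z(e): e\in E\}$; it is compact Hausdorff, and $\overline{\partial T}$ denotes the closure of $\partial T$. Automorphisms of $T$ act on $T\cup\partial T$. An automorphism is hyperbolic if it fixes no vertex and inverts no edge; such an automorphism has exactly two fixed points in $T\cup\partial T$, both in $\partial T$. An action of $\Gamma$ on $T$ is minimal if $T$ has no proper $\Gamma$-invariant subtree, and strongly hyperbolic if $\Gamma$ contains two hyperbolic automorphisms with disjoint fixed point sets. *)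

From Stdlib Require Import List Arith.
Import ListNotations.


Record graph := {
  V : Type;
  E : Type;
  src : E -> V;
  rng : E -> V;
  bar : E -> E;
  bar_inv : forall e, bar (bar e) = e;
  bar_neq : forall e, bar e <> e;
  src_bar : forall e, src (bar e) = rng e
}.

Fixpoint is_path (T : graph) (u : V T) (l : list (E T)) (v : V T) : Prop :=
  match l with
  | nil => u = v
  | e :: l' => src T e = u /\ is_path T (rng T e) l' v
  end.

Fixpoint reduced (T : graph) (l : list (E T)) : Prop :=
  match l with
  | e1 :: ((e2 :: _) as l') => e2 <> bar T e1 /\ reduced T l'
  | _ => True
  end.

Definition is_tree (T : graph) : Prop :=
  (exists v : V T, True) /\
  (forall u v : V T, exists l, is_path T u l v) /\
  (forall (u : V T) l, is_path T u l u -> reduced T l -> l = nil).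

Definition dist (T : graph) (u v : V T) (n : nat) : Prop :=
  (exists l, is_path T u l v /\ length l = n) /\
  (forall l, is_path T u l v -> n <= length l).

Definition is_ray (T : graph) (rho : nat -> V T) : Prop :=
  forall i n, dist T (rho i) (rho (i + n)) n.

Definition cofinal (T : graph) (rho rho' : nat -> V T) : Prop :=
  exists k m, forall i, rho (i + k) = rho' (i + m).

Definition inZ0 (T : graph) (e : E T) (v : V T) : Prop :=
  exists a b, dist T v (src T e) a /\ dist T v (rng T e) b /\ b < a.

Definition inZB (T : graph) (e : E T) (rho : nat -> V T) : Prop :=
  exists rho', is_ray T rho' /\ cofinal T rho rho' /\
    exists j, rho' j = src T e /\ rho' (S j) = rng T e.

(** Points of T ∪ ∂T: vertices, and boundary points represented by rays
    (two rays representing the same point iff cofinal). *)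
Inductive point (T : graph) : Type :=
  | PV : V T -> point T
  | PB : forall rho : nat -> V T, is_ray T rho -> point T.

Definition inZ (T : graph) (e : E T) (x : point T) : Prop :=
  match x with
  | PV _ v => inZ0 T e v
  | PB _ rho _ => inZB T e rho
  end.

(** x lies in the closure of ∂T in the shadow topology: every basic open
    neighbourhood (finite intersection of subbasic sets Z(e)) of x meets ∂T. *)
Definition in_closure_boundary (T : graph) (x : point T) : Prop :=
  forall l : list (E T), (forall e, In e l -> inZ T e x) ->
    exists rho (h : is_ray T rho), forall e, In e l -> inZ T e (PB T rho h).

Record group := {
  G : Type;
  mul : G -> G -> G;
  one : G;
  inv : G -> G;
  mulA : forall x y z, mul x (mul y z) = mul (mul x y) z;
  mul1g : forall x, mul one x = x;
  mulVg : forall x, mul (inv x) x = one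
}.

Record action (T : graph) (Gm : group) := {
  actV : G Gm -> V T -> V T;
  actE : G Gm -> E T -> E T;
  act_src : forall g e, src T (actE g e) = actV g (src T e);
  act_rng : forall g e, rng T (actE g e) = actV g (rng T e);
  act_bar : forall g e, actE g (bar T e) = bar T (actE g e);
  actV_one : forall v, actV (one Gm) v = v;
  actE_one : forall e, actE (one Gm) e = e;
  actV_mul : forall g h v, actV (mul Gm g h) v = actV g (actV h v);
  actE_mul : forall g h e, actE (mul Gm g h) e = actE g (actE h e)
}.

Arguments actV {T Gm} a _ _.
Arguments actE {T Gm} a _ _.

Definition fixes (T : graph) (Gm : group) (A : action T Gm) (g : G Gm)
  (x : point T) : Prop :=
  match x with
  | PV _ v => actV A g v = v
  | PB _ rho _ => cofinal T (fun i => actV A g (rho i)) rho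
  end.

Arguments fixes {T Gm} A g x.
Arguments in_closure_boundary {T} x.

Definition hyperbolic (T : graph) (Gm : group) (A : action T Gm) (g : G Gm) : Prop :=
  (forall v, actV A g v <> v) /\ (forall e, actE A g e <> bar T e).

Arguments hyperbolic {T Gm} A g.

Definition strongly_hyperbolic (T : graph) (Gm : group) (A : action T Gm) : Prop :=
  exists g h, hyperbolic A g /\ hyperbolic A h /\
    forall x : point T, ~ (fixes A g x /\ fixes A h x).

Arguments strongly_hyperbolic {T Gm} A.

Definition minimal (T : graph) (Gm : group) (A : action T Gm) : Prop :=
  forall W : V T -> Prop,
    (exists v, W v) ->
    (forall u v, W u -> W v -> exists l, is_path T u l v /\
        Forall (fun e => W (src T e) /\ W (rng T e)) l) ->
    (forall g v, W v -> W (actV A g v)) ->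
    forall v, W v.

Arguments minimal {T Gm} A.

Definition fixes_Z0 (T : graph) (Gm : group) (A : action T Gm) (e : E T) (g : G Gm) :=
  forall v, inZ0 T e v -> fixes A g (PV T v).
Definition fixes_ZB (T : graph) (Gm : group) (A : action T Gm) (e : E T) (g : G Gm) :=
  forall rho (h : is_ray T rho), inZB T e rho -> fixes A g (PB T rho h).
Definition fixes_Z (T : graph) (Gm : group) (A : action T Gm) (e : E T) (g : G Gm) :=
  forall x, inZ T e x -> fixes A g x.
Definition fixes_Z_cl (T : graph) (Gm : group) (A : action T Gm) (e : E T) (g : G Gm) :=
  forall x, inZ T e x -> in_closure_boundary x -> fixes A g x.

Arguments fixes_Z0 {T Gm} A e g.
Arguments fixes_ZB {T Gm} A e g.
Arguments fixes_Z {T Gm} A e g.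
Arguments fixes_Z_cl {T Gm} A e g.

(* A ray representing a point of Z_B(e) eventually stays in Z_0(e), so fixing Z_0(e) fixes
   Z_B(e); the content is the converse. If every vertex had degree at most 2, T would be a
   line whose two ends are fixed by every hyperbolic element, against strong hyperbolicity.
   So T has branch vertices, and by minimality T is the convex hull of them: every vertex has
   two neighbours, every edge starts a ray, and beyond every edge lies a branch vertex. This
   produces a vertex c of Z_0(e) all of whose directions lead into Z_B(e); an isometry fixing
   three ends issuing from c in distinct directions fixes c. The fixed set then spreads over
   Z_0(e) by induction on the distance to c: a fixed vertex together with a fixed end pins down
   the whole ray between them, and if g moved v, then g(v) would be another neighbour of the
   (fixed) vertex next to v towards c, itself fixed, against injectivity. *)
From Stdlib Require Import List Arith Lia Classical ClassicalEpsilon.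
Import ListNotations.

Lemma ex_minimal_nat (P : nat -> Prop) : (exists n, P n) -> exists n, P n /\ forall m, P m -> n <= m.
Proof.
  intro HP.
  destruct (dec_inh_nat_subset_has_unique_least_element P (fun n => classic (P n)) HP) as [n [[Hn Hmin] _]].
  exists n. auto.
Qed.

Lemma mulgV (Gm : group) x : mul Gm x (inv Gm x) = one Gm.
Proof.
  set (y := mul Gm x (inv Gm x)).
  assert (Hyy : mul Gm y y = y).
  { unfold y. rewrite <- mulA, (mulA Gm (inv Gm x) x (inv Gm x)), mulVg, mul1g. reflexivity. }
  transitivity (mul Gm (mul Gm (inv Gm y) y) y); [rewrite mulVg, mul1g; reflexivity|].
  rewrite <- mulA, Hyy, mulVg. reflexivity.
Qed.

Section Tree.

Variable T : graph.
Variable HT : is_tree T.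

Notation Vx := (V T).
Notation Ex := (E T).
Notation s := (src T).
Notation r := (rng T).
Notation b := (bar T).

Lemma rng_bar e : r (b e) = s e.
Proof. rewrite <- (src_bar T (b e)), (bar_inv T e). reflexivity. Qed.

Lemma is_path_app u l1 l2 w :
  is_path T u (l1 ++ l2) w <-> exists v, is_path T u l1 v /\ is_path T v l2 w.
Proof.
  revert u; induction l1 as [|a l1 IH]; intro u; simpl.
  - split; [intro H; exists u; auto | intros [v [-> H]]; auto].
  - split.
    + intros [Ha H]. apply IH in H. destruct H as [v [H1 H2]]. exists v; auto.
    + intros [v [[Ha H1] H2]]. split; auto. apply IH. exists v; auto.
Qed.

Definition rev_path (l : list Ex) := rev (map b l).

Lemma is_path_rev u l v : is_path T u l v -> is_path T v (rev_path l) u.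
Proof.
  revert u; induction l as [|a l IH]; intros u H; simpl in *.
  - subst; reflexivity.
  - destruct H as [Ha H]. apply IH in H. unfold rev_path in *; simpl.
    apply is_path_app. exists (r a). split; auto. simpl. split.
    + apply src_bar.
    + rewrite rng_bar; auto.
Qed.

Definition head_not_bar (a : Ex) (l : list Ex) : Prop :=
  match l with [] => True | c :: _ => c <> b a end.

Lemma reduced_cons a l : reduced T (a :: l) <-> head_not_bar a l /\ reduced T l.
Proof. destruct l; simpl; tauto. Qed.

Lemma reduced_app_pivot l x m :
  reduced T (l ++ [x]) -> reduced T (x :: m) -> reduced T (l ++ x :: m).
Proof.
  induction l as [|a l IH]; simpl; auto.
  intros H1 H2. apply reduced_cons in H1. apply reduced_cons. destruct H1 as [Hh Hr].
  split; auto. destruct l; simpl in *; auto.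
Qed.

Lemma reduced_rev_path l : reduced T l -> reduced T (rev_path l).
Proof.
  induction l as [|a l IH]; simpl; auto.
  intro H. apply reduced_cons in H. destruct H as [Hh Hr].
  unfold rev_path; simpl. fold (rev_path l).
  destruct l as [|c l].
  - simpl. auto.
  - assert (E1 : rev_path (c :: l) = rev_path l ++ [b c]) by reflexivity.
    rewrite E1 in *. rewrite <- app_assoc. simpl.
    apply reduced_app_pivot; auto. simpl. split; auto.
    intro Hbb. rewrite (bar_inv T c) in Hbb. apply Hh. congruence.
Qed.

Lemma reduced_path_unique u l1 l2 v :
  is_path T u l1 v -> is_path T u l2 v -> reduced T l1 -> reduced T l2 -> l1 = l2.
Proof.
  destruct HT as [_ [_ Hcirc]].
  revert u l2; induction l1 as [|a l1 IH]; intros u l2 H1 H2 R1 R2.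
  - simpl in H1; subst. symmetry. eapply Hcirc; eauto.
  - destruct l2 as [|c l2].
    + simpl in H2; subst. exfalso. assert (a :: l1 = []) by (eapply Hcirc; eauto). discriminate.
    + destruct H1 as [Ha H1]. destruct H2 as [Hc H2].
      destruct (classic (a = c)) as [<-|Hne].
      * f_equal. eapply IH; eauto.
        -- apply reduced_cons in R1; tauto.
        -- apply reduced_cons in R2; tauto.
      * exfalso.
        assert (P : is_path T v (rev_path (a :: l1) ++ c :: l2) v).
        { apply is_path_app. exists u. split.
          - apply is_path_rev. simpl. auto.
          - simpl. auto. }
        assert (Rd : reduced T (rev_path (a :: l1) ++ c :: l2)).
        { assert (E1 : rev_path (a :: l1) = rev_path l1 ++ [b a]) by reflexivity.
          rewrite E1, <- app_assoc. simpl. apply reduced_app_pivot.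
          - rewrite <- E1. apply reduced_rev_path; auto.
          - apply reduced_cons. split; auto. simpl. intro Hcb. apply Hne.
            rewrite Hcb, bar_inv. reflexivity. }
        pose proof (Hcirc v _ P Rd) as Hn. destruct (rev_path (a :: l1)); discriminate.
Qed.

Lemma not_reduced_backtrack l : ~ reduced T l -> exists p a q, l = p ++ a :: b a :: q.
Proof.
  induction l as [|a l IH]; simpl; intro H.
  - exfalso; auto.
  - destruct l as [|c l]; [exfalso; auto|].
    destruct (classic (c = b a)) as [Hc|Hc].
    + exists [], a, l. simpl. rewrite Hc. reflexivity.
    + assert (~ reduced T (c :: l)) by tauto.
      destruct (IH H0) as [p [a' [q Hq]]]. exists (a :: p), a', q. rewrite Hq. reflexivity.
Qed.

Lemma dist_exists u v : exists n, dist T u v n.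
Proof.
  destruct HT as [_ [Hc _]].
  destruct (ex_minimal_nat (fun n => exists l, is_path T u l v /\ length l = n)) as [n [[l [Hl Hn]] Hm]].
  { destruct (Hc u v) as [l Hl]. exists (length l), l; auto. }
  exists n. split; [exists l; auto|]. intros l' Hl'. apply Hm. exists l'; auto.
Qed.

Definition d (u v : Vx) : nat := proj1_sig (constructive_indefinite_description _ (dist_exists u v)).

Lemma dist_d u v : dist T u v (d u v).
Proof. unfold d. destruct (constructive_indefinite_description _ _); auto. Qed.

Lemma dist_unique u v n m : dist T u v n -> dist T u v m -> n = m.
Proof.
  intros [[l1 [H1 L1]] M1] [[l2 [H2 L2]] M2].
  specialize (M1 l2 H2). specialize (M2 l1 H1). lia.
Qed.

Lemma dist_iff_d u v n : dist T u v n <-> n = d u v.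
Proof. split; intro H. - eapply dist_unique; eauto. apply dist_d. - subst; apply dist_d. Qed.

Lemma d_le_length u l v : is_path T u l v -> d u v <= length l.
Proof. intro H. destruct (dist_d u v) as [_ M]. auto. Qed.

Lemma geodesic_exists u v : exists l, is_path T u l v /\ length l = d u v /\ reduced T l.
Proof.
  destruct (dist_d u v) as [[l [H L]] M]. exists l. repeat split; auto.
  apply NNPP; intro Hn. destruct (not_reduced_backtrack _ Hn) as [p [a [q ->]]].
  apply is_path_app in H. destruct H as [w [Hp Hq]]. simpl in Hq.
  destruct Hq as [Ha [Hb Hq]].
  assert (P : is_path T u (p ++ q) v).
  { apply is_path_app. exists w. split; auto. rewrite rng_bar, Ha in Hq. auto. }
  specialize (M _ P). rewrite !length_app in M, L. simpl in *. lia.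
Qed.

Lemma reduced_path_length u l v : is_path T u l v -> reduced T l -> length l = d u v.
Proof.
  intros H R. destruct (geodesic_exists u v) as [l' [H' [L' R']]].
  rewrite (reduced_path_unique _ _ _ _ H H' R R'). auto.
Qed.

Lemma d_refl u : d u u = 0.
Proof. symmetry. apply dist_iff_d. split. exists []; simpl; auto. intros; lia. Qed.

Lemma d_eq0 u v : d u v = 0 -> u = v.
Proof.
  intro H. destruct (geodesic_exists u v) as [l [Hl [L _]]]. rewrite H in L.
  destruct l; [simpl in Hl; auto| discriminate].
Qed.

Lemma d_sym u v : d u v = d v u.
Proof.
  destruct (geodesic_exists u v) as [l [Hl [L _]]]. destruct (geodesic_exists v u) as [l' [Hl' [L' _]]].
  pose proof (d_le_length _ _ _ (is_path_rev _ _ _ Hl)).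
  pose proof (d_le_length _ _ _ (is_path_rev _ _ _ Hl')).
  unfold rev_path in *. rewrite length_rev, length_map in *. lia.
Qed.

Lemma d_triangle u v w : d u w <= d u v + d v w.
Proof.
  destruct (geodesic_exists u v) as [l [Hl [L _]]]. destruct (geodesic_exists v w) as [l' [Hl' [L' _]]].
  assert (P : is_path T u (l ++ l') w) by (apply is_path_app; eauto).
  pose proof (d_le_length _ _ _ P). rewrite length_app in *. lia.
Qed.

Lemma d_eq1_edge u v : d u v = 1 <-> exists e, s e = u /\ r e = v.
Proof.
  split.
  - intro H. destruct (geodesic_exists u v) as [l [Hl [L _]]]. rewrite H in L.
    destruct l as [|e [|]]; try discriminate. simpl in Hl. exists e; tauto.
  - intros [e [He1 He2]]. symmetry. rewrite <- (reduced_path_length u [e] v); simpl; auto.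
Qed.

Lemma edge_unique e1 e2 : s e1 = s e2 -> r e1 = r e2 -> e1 = e2.
Proof.
  intros H1 H2. assert (P : [e1] = [e2]).
  { apply (reduced_path_unique (s e1) [e1] [e2] (r e1)); simpl; auto. }
  inversion P; auto.
Qed.

Lemma d_adjacent u v z : d u v = 1 -> d u z = S (d v z) \/ d v z = S (d u z).
Proof.
  intro H. destruct (proj1 (d_eq1_edge u v) H) as [e [He1 He2]].
  destruct (geodesic_exists v z) as [l [Hl [L R]]].
  destruct l as [|c l].
  - simpl in Hl. subst z. left. rewrite d_refl, <- He2, <- He1. 
    apply (proj2 (d_eq1_edge _ _)). eauto.
  - destruct (classic (c = b e)) as [Hc|Hc].
    + right. destruct Hl as [Hcs Hl]. subst c. rewrite rng_bar, He1 in Hl.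
      pose proof (d_le_length _ _ _ Hl). simpl in L.
      pose proof (d_triangle v u z). rewrite (d_sym v u), H in H1. lia.
    + left. assert (P : is_path T u (e :: c :: l) z).
      { simpl. split; auto. rewrite He2. exact Hl. }
      assert (Rd : reduced T (e :: c :: l)) by (simpl; split; auto).
      rewrite <- (reduced_path_length _ _ _ P Rd). simpl in *. lia.
Qed.

Lemma closer_neighbour_exists u v : u <> v -> exists y, d u y = 1 /\ S (d y v) = d u v.
Proof.
  intro Hne. destruct (geodesic_exists u v) as [l [Hl [L R]]].
  destruct l as [|e l]; [simpl in Hl; contradiction|].
  destruct Hl as [He Hl]. exists (r e). split.
  - apply d_eq1_edge; eauto.
  - pose proof (d_le_length _ _ _ Hl). simpl in L.
    pose proof (d_triangle u (r e) v).
    assert (d u (r e) = 1) by (apply d_eq1_edge; eauto). lia.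
Qed.

Lemma closer_neighbour_unique x y1 y2 z : d x y1 = 1 -> d x y2 = 1 ->
  S (d y1 z) = d x z -> S (d y2 z) = d x z -> y1 = y2.
Proof.
  intros A1 A2 D1 D2.
  destruct (proj1 (d_eq1_edge _ _) A1) as [e1 [E1 F1]].
  destruct (proj1 (d_eq1_edge _ _) A2) as [e2 [E2 F2]].
  destruct (geodesic_exists y1 z) as [l1 [H1 [L1 R1]]].
  destruct (geodesic_exists y2 z) as [l2 [H2 [L2 R2]]].
  assert (Rd : forall e y l, s e = x -> r e = y -> is_path T y l z -> length l = d y z ->
     S (d y z) = d x z -> reduced T l -> reduced T (e :: l)).
  { intros e y l Es Er Hp Lp Dp Rp. apply reduced_cons. split; auto.
    destruct l as [|c l]; simpl; auto. intro Hc. subst c.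
    destruct Hp as [_ Hp]. rewrite rng_bar, Es in Hp. pose proof (d_le_length _ _ _ Hp).
    simpl in Lp. lia. }
  assert (P1 : is_path T x (e1 :: l1) z) by (simpl; split; auto; rewrite F1; auto).
  assert (P2 : is_path T x (e2 :: l2) z) by (simpl; split; auto; rewrite F2; auto).
  pose proof (reduced_path_unique _ _ _ _ P1 P2 (Rd _ _ _ E1 F1 H1 L1 D1 R1) (Rd _ _ _ E2 F2 H2 L2 D2 R2)) as Heq.
  inversion Heq. subst. congruence.
Qed.

Lemma toward_exists u v : exists y, u <> v -> d u y = 1 /\ S (d y v) = d u v.
Proof.
  destruct (classic (u = v)) as [H|H]. - exists u; tauto.
  - destruct (closer_neighbour_exists u v H) as [y Hy]. exists y; auto.
Qed.

(* The neighbour of [u] on the geodesic to [v]; an arbitrary vertex when [u = v]. *)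
Definition toward u v := proj1_sig (constructive_indefinite_description _ (toward_exists u v)).

Lemma toward_spec u v : u <> v -> d u (toward u v) = 1 /\ S (d (toward u v) v) = d u v.
Proof. unfold toward. destruct (constructive_indefinite_description _ _); auto. Qed.

Lemma toward_unique u v y : d u y = 1 -> S (d y v) = d u v -> y = toward u v.
Proof.
  intros H1 H2. assert (Hne : u <> v) by (intros ->; rewrite d_refl in H2; discriminate).
  destruct (toward_spec u v Hne) as [A B]. eapply closer_neighbour_unique; eauto.
Qed.

Lemma toward_or_back u y x : d u y = 1 -> y = toward u x \/ u = toward y x.
Proof.
  intro Huy. destruct (d_adjacent u y x Huy) as [Hd|Hd].
  - left. apply toward_unique; auto.
  - right. apply toward_unique; [rewrite d_sym; exact Huy | auto].
Qed.

Definition seg x v i := Nat.iter i (fun u => toward u v) x.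

Lemma seg_0 x v : seg x v 0 = x.
Proof. reflexivity. Qed.

Lemma seg_S x v i : seg x v (S i) = toward (seg x v i) v.
Proof. reflexivity. Qed.

Lemma d_seg_end x v i : i <= d x v -> d (seg x v i) v = d x v - i.
Proof.
  induction i; intro H. - simpl. lia.
  - rewrite seg_S. assert (Hn : seg x v i <> v).
    { intro E. specialize (IHi ltac:(lia)). rewrite E, d_refl in IHi. lia. }
    destruct (toward_spec _ _ Hn) as [_ B]. rewrite IHi in B by lia. lia.
Qed.

Lemma seg_adjacent x v i : i < d x v -> d (seg x v i) (seg x v (S i)) = 1.
Proof.
  intro H. rewrite seg_S. apply toward_spec. intro E. pose proof (d_seg_end x v i ltac:(lia)).
  rewrite E, d_refl in H0. lia.
Qed.

Lemma seg_end x v : seg x v (d x v) = v.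
Proof. apply d_eq0. rewrite d_seg_end; lia. Qed.

Lemma d_seg_start x v i : i <= d x v -> d x (seg x v i) = i.
Proof.
  intro H. assert (A : d x (seg x v i) <= i).
  { induction i. - simpl. rewrite d_refl; lia.
    - pose proof (d_triangle x (seg x v i) (seg x v (S i))).
      rewrite (seg_adjacent x v i) in H0 by lia. specialize (IHi ltac:(lia)). lia. }
  pose proof (d_triangle x (seg x v i) v). rewrite d_seg_end in H0 by lia. lia.
Qed.

Definition nonbacktracking (w : nat -> Vx) n :=
  (forall i, i < n -> d (w i) (w (S i)) = 1) /\ (forall i, S (S i) <= n -> w i <> w (S (S i))).

Lemma nonbacktracking_d w n : nonbacktracking w n -> d (w 0) (w n) = n.
Proof.
  intros [A Bk].
  assert (H : forall k, k <= n -> d (w 0) (w k) = k /\ (k >= 1 -> d (w 0) (w (k-1)) = k - 1)).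
  { induction k; intro Hk.
    - rewrite d_refl. split; auto; lia.
    - destruct IHk as [I1 I2]; [lia|]. split; [|intros _; replace (S k - 1) with k by lia; auto].
      destruct k.
      + apply A; lia.
      + specialize (I2 ltac:(lia)). replace (S k - 1) with k in I2 by lia.
        assert (Ad : d (w (S k)) (w (S (S k))) = 1) by (apply A; lia).
        assert (J1 : d (w (S k)) (w 0) = S k) by (rewrite d_sym; auto).
        assert (J2 : d (w k) (w 0) = k) by (rewrite d_sym; auto).
        destruct (d_adjacent _ _ (w 0) Ad) as [Q|Q].
        * exfalso. apply (Bk k); [lia|].
          assert (Ak : d (w (S k)) (w k) = 1) by (rewrite d_sym; apply A; lia).
          apply (closer_neighbour_unique (w (S k)) (w k) (w (S (S k))) (w 0)); auto; lia.
        * rewrite d_sym. lia. }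
  apply H; lia.
Qed.

Lemma nonbacktracking_shift w i n : nonbacktracking w (i + n) -> nonbacktracking (fun k => w (i + k)) n.
Proof.
  intros [A Bk]. split; intros j Hj; simpl.
  - replace (i + S j) with (S (i + j)) by lia. apply A; lia.
  - replace (i + S (S j)) with (S (S (i + j))) by lia. apply Bk; lia.
Qed.

Lemma nonbacktracking_forever_d w : (forall n, nonbacktracking w n) -> forall i n, d (w i) (w (i + n)) = n.
Proof.
  intros H i n. pose proof (nonbacktracking_d _ n (nonbacktracking_shift w i n (H (i + n)))). simpl in H0.
  rewrite Nat.add_0_r in H0. auto.
Qed.

Lemma is_ray_d rho : is_ray T rho <-> forall i n, d (rho i) (rho (i + n)) = n.
Proof.
  unfold is_ray. split; intros H i n; specialize (H i n).
  - apply dist_iff_d in H; auto.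
  - apply dist_iff_d; auto.
Qed.

Lemma ray_nonbacktracking rho n : is_ray T rho -> nonbacktracking rho n.
Proof.
  intro H. rewrite is_ray_d in H. split; intros i Hi.
  - specialize (H i 1). rewrite Nat.add_1_r in H. auto.
  - specialize (H i 2). intro E. replace (i+2) with (S (S i)) in H by lia.
    rewrite <- E, d_refl in H. discriminate.
Qed.

Lemma nonbacktracking_ray w : (forall n, nonbacktracking w n) -> is_ray T w.
Proof. intro H. apply is_ray_d. apply nonbacktracking_forever_d; auto. Qed.

Lemma seg_nonbacktracking x v : nonbacktracking (seg x v) (d x v).
Proof.
  split; intros i Hi. - apply seg_adjacent; lia.
  - intro E. pose proof (d_seg_end x v i). pose proof (d_seg_end x v (S (S i))).
    rewrite E in H. lia.
Qed.

Lemma seg_unique x y p i : d x p = i -> d p y = d x y - i -> i <= d x y -> p = seg x y i.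
Proof.
  revert p; induction i; intros p H1 H2 H3.
  - simpl. symmetry. apply d_eq0. auto.
  - assert (Hne : p <> x) by (intros ->; rewrite d_refl in H1; discriminate).
    destruct (toward_spec p x Hne) as [A B].
    assert (Hp' : toward p x = seg x y i).
    { apply IHi; [rewrite d_sym; rewrite d_sym in H1; lia| |lia].
      pose proof (d_triangle (toward p x) p y). pose proof (d_triangle x (toward p x) y).
      rewrite d_sym in A. rewrite (d_sym x (toward p x)) in H0. rewrite (d_sym p x) in B. lia. }
    rewrite seg_S. apply toward_unique.
    + rewrite <- Hp', d_sym. auto.
    + rewrite <- Hp'.
      assert (d (toward p x) y = d x y - i) by (rewrite Hp'; apply d_seg_end; lia). lia.
Qed.

Lemma seg_last x v : x <> v -> seg x v (d x v - 1) = toward v x.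
Proof.
  intro Hne. assert (Hd : d x v >= 1) by (destruct (d x v) eqn:E; [apply d_eq0 in E; contradiction| lia]).
  apply toward_unique.
  - rewrite d_sym. pose proof (seg_adjacent x v (d x v - 1) ltac:(lia)).
    replace (S (d x v - 1)) with (d x v) in H by lia. rewrite seg_end in H. auto.
  - rewrite (d_sym (seg x v (d x v - 1)) x), d_seg_start by lia. rewrite (d_sym v x). lia.
Qed.

Lemma seg_1 x v : seg x v 1 = toward x v.
Proof. reflexivity. Qed.

Definition prepend x v (f : nat -> Vx) i := if i <=? d x v then seg x v i else f (i - d x v).

Lemma prepend_nonbacktracking x v f m : nonbacktracking f m -> f 0 = v -> (x = v \/ m = 0 \/ f 1 <> toward v x) ->
  nonbacktracking (prepend x v f) (d x v + m).
Proof.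
  intros [A Bk] Hf0 Hj. set (len := d x v).
  assert (Hg : forall i, i <= len -> prepend x v f i = seg x v i).
  { intros i Hi. unfold prepend. fold len. destruct (Nat.leb_spec i len); [auto|lia]. }
  assert (Hf : forall i, len <= i -> prepend x v f i = f (i - len)).
  { intros i Hi. unfold prepend. fold len. destruct (Nat.leb_spec i len).
    - assert (i = len) by lia. subst i. rewrite Nat.sub_diag, Hf0. apply seg_end.
    - auto. }
  split; intros i Hi.
  - destruct (Nat.lt_ge_cases i len).
    + rewrite !Hg by lia. apply seg_adjacent; auto.
    + rewrite !Hf by lia. replace (S i - len) with (S (i - len)) by lia. apply A; lia.
  - destruct (Nat.lt_ge_cases (S (S i)) (S len)).
    + rewrite !Hg by lia. apply (proj2 (seg_nonbacktracking x v)). fold len. lia.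
    + destruct (Nat.lt_ge_cases i len).
      * assert (i = len - 1) by lia. subst i. rewrite Hg by lia. rewrite Hf by lia.
        assert (Hxv : x <> v) by (intros E; subst len; rewrite E, d_refl in H0; lia).
        rewrite seg_last by auto. replace (S (S (len - 1)) - len) with 1 by lia.
        destruct Hj as [Hj|[Hj|Hj]]; [contradiction|lia|]. auto.
      * rewrite !Hf by lia. replace (S (S i) - len) with (S (S (i - len))) by lia. apply Bk. lia.
Qed.

Lemma prepend_ray x v f : is_ray T f -> f 0 = v -> (x = v \/ f 1 <> toward v x) -> is_ray T (prepend x v f).
Proof.
  intros R H0 Hj. apply nonbacktracking_ray. intro n.
  assert (W : nonbacktracking (prepend x v f) (d x v + n)).
  { apply prepend_nonbacktracking; auto. apply ray_nonbacktracking; auto. tauto. }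
  destruct W as [A Bk]. split; intros; [apply A|apply Bk]; lia.
Qed.

Lemma prepend_0 x v f : prepend x v f 0 = x.
Proof. unfold prepend. simpl. reflexivity. Qed.

Lemma prepend_tail x v f i : f 0 = v -> prepend x v f (d x v + i) = f i.
Proof.
  intro H0. unfold prepend. destruct (Nat.leb_spec (d x v + i) (d x v)).
  - assert (i = 0) by lia. subst. rewrite Nat.add_0_r, seg_end. auto.
  - f_equal; lia.
Qed.

Lemma prepend_1 x v f : x <> v -> prepend x v f 1 = toward x v.
Proof.
  intro H. unfold prepend. destruct (Nat.leb_spec 1 (d x v)). - reflexivity.
  - exfalso. apply H. apply d_eq0. lia.
Qed.

Lemma prepend_cofinal x v f : f 0 = v -> cofinal T (prepend x v f) f.
Proof. intro H. exists (d x v), 0. intro i. rewrite Nat.add_0_r, Nat.add_comm. apply prepend_tail; auto. Qed.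

Lemma d_through x v y : toward v x <> toward v y -> d x y = d x v + d v y.
Proof.
  intro Hn. destruct (classic (x = v)) as [->|Hx]; [rewrite d_refl; auto|].
  destruct (classic (y = v)) as [->|Hy]; [rewrite d_refl; lia|].
  assert (W : nonbacktracking (prepend x v (seg v y)) (d x v + d v y)).
  { apply prepend_nonbacktracking. - apply seg_nonbacktracking. - reflexivity. - right. right. rewrite seg_1. auto. }
  apply nonbacktracking_d in W. rewrite prepend_0, prepend_tail, seg_end in W by auto. auto.
Qed.

Lemma cofinal_rays_eq rho sig : is_ray T rho -> is_ray T sig -> rho 0 = sig 0 ->
  cofinal T rho sig -> forall n, rho n = sig n.
Proof.
  intros R1 R2 H0 [k [m Hkm]] n. rewrite is_ray_d in R1, R2.
  assert (k = m).
  { pose proof (R1 0 k). pose proof (R2 0 m). pose proof (Hkm 0). simpl in *. rewrite H0, H2 in H. lia. }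
  subst m.
  pose proof (R1 0 n) as A1. pose proof (R1 0 (n+k)) as A2. pose proof (R1 n k) as A3.
  pose proof (R2 0 n) as B1. pose proof (R2 0 (n+k)) as B2. pose proof (R2 n k) as B3.
  pose proof (Hkm n) as Hn. simpl in *. rewrite <- Hn in B2, B3. rewrite <- H0 in B1, B2.
  assert (E1 : rho n = seg (rho 0) (rho (n+k)) n) by (apply seg_unique; lia).
  assert (E2 : sig n = seg (rho 0) (rho (n+k)) n) by (apply seg_unique; lia).
  congruence.
Qed.

Lemma d_seg_le x v i m : i + m <= d x v -> d (seg x v i) (seg x v (i + m)) <= m.
Proof.
  induction m; intro H. - rewrite Nat.add_0_r, d_refl. lia.
  - pose proof (d_triangle (seg x v i) (seg x v (i + m)) (seg x v (i + S m))).
    replace (i + S m) with (S (i + m)) in * by lia. rewrite seg_adjacent in H0 by lia.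
    specialize (IHm ltac:(lia)). lia.
Qed.

Lemma d_seg x v i j : i <= j -> j <= d x v -> d (seg x v i) (seg x v j) = j - i.
Proof.
  intros H1 H2. pose proof (d_seg_le x v i (j - i) ltac:(lia)). replace (i + (j - i)) with j in H by lia.
  pose proof (d_triangle x (seg x v i) (seg x v j)). rewrite !d_seg_start in H0 by lia. lia.
Qed.

Definition isometry (f : Vx -> Vx) := forall u v, d (f u) (f v) = d u v.

Lemma isometry_inj f u v : isometry f -> f u = f v -> u = v.
Proof. intros I E. apply d_eq0. rewrite <- I, E. apply d_refl. Qed.

Lemma isometry_iter f k : isometry f -> isometry (Nat.iter k f).
Proof. intros I. induction k; intros u v; simpl; auto. rewrite I; auto. Qed.

Lemma isometry_ray f rho : isometry f -> is_ray T rho -> is_ray T (fun i => f (rho i)).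
Proof. intros If R. rewrite is_ray_d in *. intros i n. rewrite If. auto. Qed.

(* The axis is the union of the translates [f^k [a, f a]]; the hypothesis says that two
   consecutive translates meet at [f a] without backtracking. *)
Lemma translation_ray (f : Vx -> Vx) a : isometry f -> d a (f a) >= 1 ->
  seg a (f a) (d a (f a) - 1) <> f (seg a (f a) 1) ->
  exists F, is_ray T F /\ F 0 = a /\ F 1 = toward a (f a) /\ forall n, f (F n) = F (n + d a (f a)).
Proof.
  intros I Ht J. set (t := d a (f a)) in *. set (p := seg a (f a)).
  set (F := fun n => Nat.iter (n / t) f (p (n mod t))).
  assert (Ff : forall k i, i <= t -> F (k * t + i) = Nat.iter k f (p i)).
  { intros k i Hi. unfold F. destruct (Nat.eq_dec i t) as [->|Hne].
    - replace (k * t + t) with (S k * t + 0) by lia.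
      rewrite <- (Nat.div_unique (S k * t + 0) t (S k) 0) by lia.
      rewrite <- (Nat.mod_unique (S k * t + 0) t (S k) 0) by lia.
      rewrite Nat.iter_succ_r. unfold p. rewrite seg_0. f_equal. unfold t. symmetry. apply seg_end.
    - rewrite <- (Nat.div_unique (k * t + i) t k i) by lia.
      rewrite <- (Nat.mod_unique (k * t + i) t k i) by lia. reflexivity. }
  assert (Dn : forall n, n = (n / t) * t + n mod t /\ n mod t < t).
  { intro n. split. - rewrite Nat.mul_comm. apply Nat.div_mod. lia. - apply Nat.mod_upper_bound. lia. }
  exists F. split; [|split; [|split]].
  - apply nonbacktracking_ray. intro m. split; intros n _.
    + destruct (Dn n) as [E1 E2]. set (k := n / t) in *. set (i := n mod t) in *.
      rewrite E1. replace (S (k * t + i)) with (k * t + S i) by lia.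
      rewrite !Ff by lia. rewrite (isometry_iter f k I). apply seg_adjacent. unfold t in *. lia.
    + destruct (Dn n) as [E1 E2]. set (k := n / t) in *. set (i := n mod t) in *.
      rewrite E1. destruct (le_lt_dec (S (S i)) t).
      * replace (S (S (k * t + i))) with (k * t + S (S i)) by lia. rewrite !Ff by lia.
        intro E. apply (isometry_inj _ _ _ (isometry_iter f k I)) in E.
        pose proof (d_seg a (f a) i (S (S i)) ltac:(lia) ltac:(unfold t in *; lia)).
        fold p in H. rewrite E, d_refl in H. lia.
      * replace (S (S (k * t + i))) with (S k * t + 1) by lia. rewrite !Ff by lia.
        rewrite Nat.iter_succ_r. intro E. apply (isometry_inj _ _ _ (isometry_iter f k I)) in E.
        apply J. replace (t - 1) with i by lia. exact E.
  - replace 0 with (0 * t + 0) by lia. rewrite Ff by lia. reflexivity.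
  - replace 1 with (0 * t + 1) by lia. rewrite Ff by lia. reflexivity.
  - intro n. destruct (Dn n) as [E1 E2]. set (k := n / t) in *. set (i := n mod t) in *.
    rewrite E1. replace (k * t + i + t) with (S k * t + i) by lia. rewrite !Ff by lia. reflexivity.
Qed.

Lemma cofinal_refl rho : cofinal T rho rho.
Proof. exists 0, 0. auto. Qed.

Lemma cofinal_sym rho sig : cofinal T rho sig -> cofinal T sig rho.
Proof. intros [k [m H]]. exists m, k. intro i. auto. Qed.

Lemma cofinal_trans rho sig tau : cofinal T rho sig -> cofinal T sig tau -> cofinal T rho tau.
Proof.
  intros [k [m H]] [k' [m' H']]. exists (k + k'), (m + m'). intro i.
  replace (i + (k + k')) with ((i + k') + k) by lia. rewrite H.
  replace (i + k' + m) with ((i + m) + k') by lia. rewrite H'. f_equal; lia.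
Qed.

Lemma cofinal_ext rho rho' sig : (forall n, rho n = rho' n) -> cofinal T rho' sig -> cofinal T rho sig.
Proof. intros E [k [m H]]. exists k, m. intro i. rewrite E. auto. Qed.

Lemma cofinal_map (f : Vx -> Vx) rho sig : cofinal T rho sig -> cofinal T (fun i => f (rho i)) (fun i => f (sig i)).
Proof. intros [k [m H]]. exists k, m. intro i. rewrite H. auto. Qed.

Lemma ray_adjacent rho n : is_ray T rho -> d (rho n) (rho (S n)) = 1.
Proof. intro R. apply (ray_nonbacktracking rho (S n) R). lia. Qed.

Lemma ray_no_backtrack rho n : is_ray T rho -> rho n <> rho (S (S n)).
Proof. intro R. apply (ray_nonbacktracking rho (S (S n)) R). lia. Qed.

Lemma ray_d0 rho n : is_ray T rho -> d (rho 0) (rho n) = n.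
Proof. intro R. rewrite is_ray_d in R. apply (R 0 n). Qed.

Lemma ray_shift rho j : is_ray T rho -> is_ray T (fun i => rho (j + i)).
Proof. intro R. rewrite is_ray_d in *. intros i n. rewrite Nat.add_assoc. apply R. Qed.

Definition degree_le2 := forall x y1 y2 y3, d x y1 = 1 -> d x y2 = 1 -> d x y3 = 1 ->
  y1 = y2 \/ y1 = y3 \/ y2 = y3.

Section DegreeTwo.

Hypothesis Hdeg : degree_le2.

Lemma rays_eq_of_start rho sig : is_ray T rho -> is_ray T sig -> rho 0 = sig 0 -> rho 1 = sig 1 ->
  forall n, rho n = sig n.
Proof.
  intros R1 R2 E0 E1.
  assert (H : forall n, rho n = sig n /\ rho (S n) = sig (S n)).
  { induction n; auto. destruct IHn as [I1 I2]. split; auto.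
    destruct (Hdeg (rho (S n)) (rho (S (S n))) (sig (S (S n))) (rho n)) as [Q|[Q|Q]]; auto.
    - apply ray_adjacent; auto.
    - rewrite I2. apply ray_adjacent; auto.
    - rewrite d_sym. apply ray_adjacent; auto.
    - exfalso. apply (ray_no_backtrack rho n R1). auto.
    - exfalso. apply (ray_no_backtrack sig n R2). rewrite <- I1. auto. }
  intro n. apply H.
Qed.

Lemma ray_extension_unique rho n v : is_ray T rho -> n >= 1 -> d (rho n) v = 1 -> d (rho 0) v = S n ->
  v = rho (S n).
Proof.
  intros R Hn H1 H2.
  destruct (Hdeg (rho n) v (rho (n - 1)) (rho (S n))) as [Q|[Q|Q]]; auto.
  - pose proof (ray_adjacent rho (n-1) R) as X. replace (S (n-1)) with n in X by lia. rewrite d_sym; exact X.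
  - apply ray_adjacent; auto.
  - subst v. rewrite ray_d0 in H2 by auto. lia.
  - exfalso. apply (ray_no_backtrack rho (n - 1) R). replace (S (S (n - 1))) with (S n) by lia. auto.
Qed.

Lemma line_cover F G : is_ray T F -> is_ray T G -> F 0 = G 0 -> F 1 <> G 1 ->
  forall n v, d (F 0) v = n -> v = F n \/ v = G n.
Proof.
  intros RF RG E0 E1. induction n as [|[|n] IHn]; intros v Hv.
  - left. symmetry. apply d_eq0. auto.
  - destruct (Hdeg (F 0) v (F 1) (G 1)) as [W|[W|W]]; auto.
    + apply (ray_adjacent F 0 RF).
    + rewrite E0. apply (ray_adjacent G 0 RG).
    + contradiction.
  - assert (Hne : v <> F 0) by (intros ->; rewrite d_refl in Hv; discriminate).
    destruct (toward_spec v (F 0) Hne) as [A1 A2].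
    rewrite (d_sym v) in A2.
    destruct (IHn (toward v (F 0))) as [Q|Q]; [rewrite d_sym; lia | left | right].
    + apply ray_extension_unique; auto; [lia | rewrite <- Q, d_sym; exact A1].
    + apply ray_extension_unique; auto; [lia | rewrite <- Q, d_sym; exact A1 | rewrite <- E0; exact Hv].
Qed.

Lemma line_two_ends F G rho j : is_ray T F -> is_ray T G -> F 0 = G 0 -> F 1 <> G 1 ->
  is_ray T rho -> rho 0 = F j -> cofinal T rho F \/ cofinal T rho G.
Proof.
  intros RF RG E0 E1 R Hj.
  set (Aa := fun i => F (j + i)).
  assert (RA : is_ray T Aa) by (apply ray_shift; auto).
  set (Rr := prepend (F j) (F 0) G).
  assert (HnR : F j = F 0 \/ G 1 <> toward (F 0) (F j)).
  { destruct j; [left; auto|right]. rewrite <- (toward_unique (F 0) (F (S j)) (F 1)). auto.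
    - apply (ray_adjacent F 0 RF).
    - pose proof ((proj1 (is_ray_d F) RF) 1 j) as X1. pose proof (ray_d0 F (S j) RF) as X2. simpl in X1. lia. }
  assert (RR : is_ray T Rr) by (apply prepend_ray; auto).
  assert (R1 : Rr 1 <> Aa 1).
  { unfold Rr, Aa. destruct j.
    - unfold prepend. rewrite d_refl. simpl. auto.
    - rewrite prepend_1. + rewrite <- (toward_unique (F (S j)) (F 0) (F j)).
        * rewrite Nat.add_1_r. apply (ray_no_backtrack F j RF).
        * rewrite d_sym. apply (ray_adjacent F j RF).
        * rewrite d_sym, (d_sym (F (S j))). rewrite !ray_d0 by auto. lia.
      + intro E. pose proof (ray_d0 F (S j) RF). rewrite E, d_refl in H. lia. }
  destruct (Hdeg (F j) (rho 1) (Aa 1) (Rr 1)) as [Q|[Q|Q]].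
  - rewrite <- Hj. apply (ray_adjacent rho 0 R).
  - unfold Aa. rewrite Nat.add_1_r. apply (ray_adjacent F j RF).
  - pose proof (ray_adjacent Rr 0 RR). assert (X: Rr 0 = F j) by (unfold Rr; apply prepend_0). rewrite X in H. auto.
  - left. apply (cofinal_ext _ Aa). apply rays_eq_of_start; auto. unfold Aa. rewrite Nat.add_0_r. auto.
    exists 0, j. intro i. unfold Aa. f_equal. lia.
  - right. apply (cofinal_ext _ Rr). { apply rays_eq_of_start; auto; unfold Rr; rewrite ?prepend_0; auto. }
    apply prepend_cofinal. auto.
  - exfalso. auto.
Qed.

End DegreeTwo.

Definition branching x := exists y1 y2 y3, d x y1 = 1 /\ d x y2 = 1 /\ d x y3 = 1 /\
  y1 <> y2 /\ y1 <> y3 /\ y2 <> y3.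

Definition between x y z := d x z + d z y = d x y.

Lemma between_path x y : exists l, is_path T x l y /\
  Forall (fun e => between x y (src T e) /\ between x y (rng T e)) l.
Proof.
  remember (d x y) as n. revert x Heqn. induction n; intros x Hn.
  - exists []. split; [apply d_eq0; auto|constructor].
  - assert (Hne : x <> y) by (intros ->; rewrite d_refl in Hn; discriminate).
    destruct (toward_spec x y Hne) as [A1 A2].
    destruct (IHn (toward x y) ltac:(lia)) as [l [Hl Fl]].
    destruct (proj1 (d_eq1_edge _ _) A1) as [e [Es Er]].
    exists (e :: l). split.
    + simpl. split; auto. rewrite Er; auto.
    + constructor.
      * unfold between. rewrite Es, Er, d_refl, A1. lia.
      * eapply Forall_impl; [|exact Fl]. intros e' [O1 O2]. unfold between in *.
        split.
        -- pose proof (d_triangle x (toward x y) (src T e')). pose proof (d_triangle x (src T e') y). lia.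
        -- pose proof (d_triangle x (toward x y) (rng T e')). pose proof (d_triangle x (rng T e') y). lia.
Qed.

Definition hull x := exists b1 b2, branching b1 /\ branching b2 /\ between b1 b2 x.

Lemma between_sym x y z : between x y z -> between y x z.
Proof. unfold between. intro H. rewrite (d_sym y z), (d_sym z x), (d_sym y x). lia. Qed.

Lemma between_trans b1 b2 u z : between b1 b2 u -> between u b1 z -> between b1 b2 z.
Proof.
  unfold between. intros H1 H2. pose proof (d_triangle b1 z b2). pose proof (d_triangle z u b2).
  rewrite (d_sym u z), (d_sym z b1), (d_sym u b1) in *. lia.
Qed.

Lemma hull_connected u v : hull u -> hull v ->
  exists l, is_path T u l v /\ Forall (fun e => hull (src T e) /\ hull (rng T e)) l.
Proof.
  intros [b1 [b2 [B1 [B2 O1]]]] [b3 [b4 [B3 [B4 O2]]]].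
  destruct (between_path u b1) as [l1 [P1 F1]].
  destruct (between_path b1 b3) as [l2 [P2 F2]].
  destruct (between_path b3 v) as [l3 [P3 F3]].
  exists (l1 ++ l2 ++ l3). split.
  - apply is_path_app. exists b1. split; auto. apply is_path_app. eauto.
  - apply Forall_app. split; [|apply Forall_app; split].
    + eapply Forall_impl; [|exact F1]. intros e [Q1 Q2].
      split; exists b1, b2; repeat split; auto; eapply between_trans; eauto.
    + eapply Forall_impl; [|exact F2]. intros e [Q1 Q2]. split; exists b1, b3; auto.
    + eapply Forall_impl; [|exact F3]. intros e [Q1 Q2].
      split; exists b3, b4; repeat split; auto; eapply between_trans; eauto; apply between_sym; auto.
Qed.

Lemma branching_isometry f x : isometry f -> branching x -> branching (f x).
Proof.
  intros If [y1 [y2 [y3 [A1 [A2 [A3 [N1 [N2 N3]]]]]]]]. exists (f y1), (f y2), (f y3).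
  rewrite !If. repeat split; auto; intro E; apply (isometry_inj f _ _ If) in E; auto.
Qed.

Lemma hull_isometry f x : isometry f -> hull x -> hull (f x).
Proof.
  intros If [b1 [b2 [B1 [B2 O]]]]. exists (f b1), (f b2).
  repeat split; auto using branching_isometry. unfold between in *. rewrite !If. auto.
Qed.

Lemma branching_avoid b0 u : branching b0 -> exists n1 n2, d b0 n1 = 1 /\ d b0 n2 = 1 /\ n1 <> n2 /\ n1 <> u /\ n2 <> u.
Proof.
  intros [y1 [y2 [y3 [A1 [A2 [A3 [N1 [N2 N3]]]]]]]].
  destruct (classic (y1 = u)) as [->|H1]. { exists y2, y3. repeat split; auto. }
  destruct (classic (y2 = u)) as [->|H2]. { exists y1, y3. repeat split; auto. }
  exists y1, y2. repeat split; auto.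
Qed.

Definition Z0 e v := d v (r e) < d v (s e).

Lemma d_src_rng e : d (s e) (r e) = 1.
Proof. apply d_eq1_edge. eauto. Qed.

Lemma Z0_d_src e v : Z0 e v -> d v (s e) = S (d v (r e)).
Proof.
  unfold Z0. intro H. rewrite (d_sym v (s e)), (d_sym v (r e)) in *. destruct (d_adjacent (s e) (r e) v (d_src_rng e)) as [Q|Q]; lia.
Qed.

Lemma notZ0_d_rng e v : ~ Z0 e v -> d v (r e) = S (d v (s e)).
Proof.
  unfold Z0. intro H. rewrite (d_sym v (s e)), (d_sym v (r e)) in *. destruct (d_adjacent (s e) (r e) v (d_src_rng e)) as [Q|Q]; lia.
Qed.

Lemma Z0_neq_src e v : Z0 e v -> v <> s e.
Proof. intros H ->. unfold Z0 in H. rewrite d_refl in H. lia. Qed.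

Lemma Z0_boundary_edge e x y : d x y = 1 -> Z0 e x -> ~ Z0 e y -> x = r e /\ y = s e.
Proof.
  intros Hxy Zx Zy. pose proof (Z0_d_src e x Zx) as X. pose proof (notZ0_d_rng e y Zy) as Y.
  destruct (d_adjacent x y (s e) Hxy) as [P|P]; destruct (d_adjacent x y (r e) Hxy) as [Q|Q]; try lia.
  destruct (classic (d x (r e) = 0)) as [D|D].
  - split; apply d_eq0; [auto|]. lia.
  - exfalso. assert (Hx : x <> r e) by (intros ->; rewrite d_refl in D; auto).
    assert (Ey : toward x (s e) = y) by (symmetry; apply toward_unique; auto; lia).
    assert (Nr : toward x (r e) <> y).
    { intro E. destruct (toward_spec x (r e) Hx) as [_ B']. rewrite E in B'. lia. }
    pose proof (d_through (r e) x (s e) ltac:(congruence)). rewrite d_sym, d_src_rng in H.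
    rewrite (d_sym (r e) x) in H. lia.
Qed.

Lemma Z0_closer e c w y : Z0 e c -> Z0 e w -> d w y = 1 -> d y c < d w c -> Z0 e y.
Proof.
  intros Zc Zw Hwy Hy. apply NNPP. intro Zy.
  destruct (Z0_boundary_edge e w y Hwy Zw Zy) as [-> ->].
  pose proof (Z0_d_src e c Zc). rewrite (d_sym c), (d_sym c (r e)) in *. lia.
Qed.

Lemma Z0_away_from_src e w z : Z0 e w -> d w z = 1 -> z <> toward w (s e) ->
  Z0 e z /\ toward z (s e) = w.
Proof.
  intros Zw Hwz Hz. destruct (toward_or_back w z (s e) Hwz) as [E|E]; [contradiction|].
  destruct (toward_spec z (s e)) as [_ Dz].
  { intros ->. apply Hz, toward_unique; [exact Hwz | rewrite d_refl, Hwz; reflexivity]. }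
  split; [|auto].
  unfold Z0. pose proof (d_triangle z w (r e)). rewrite <- E in Dz.
  pose proof (d_sym z w). unfold Z0 in Zw. lia.
Qed.

Lemma inZ0_iff_Z0 e v : inZ0 T e v <-> Z0 e v.
Proof.
  unfold inZ0, Z0. split.
  - intros [a [b' [Ha [Hb H]]]]. apply dist_iff_d in Ha, Hb. subst. auto.
  - intro H. exists (d v (s e)), (d v (r e)). repeat split; auto; apply dist_iff_d; auto.
Qed.

Lemma inZB_of_cofinal e v sig rho : Z0 e v -> is_ray T sig -> sig 0 = v -> sig 1 <> toward v (s e) ->
  is_ray T rho -> cofinal T rho sig -> inZB T e rho.
Proof.
  intros Hz Rs S0 S1 Rr C. exists (prepend (s e) v sig). split; [|split].
  - apply prepend_ray; auto.
  - apply (cofinal_trans _ sig); auto. apply cofinal_sym. apply prepend_cofinal; auto.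
  - exists 0. split. + apply prepend_0.
    + rewrite prepend_1 by (apply not_eq_sym, Z0_neq_src; auto). symmetry. apply toward_unique.
      * apply d_src_rng.
      * pose proof (Z0_d_src e v Hz). rewrite (d_sym (r e) v), (d_sym (s e) v). lia.
Qed.

Lemma fixed_ray_pointwise f c rho : isometry f -> f c = c -> is_ray T rho -> rho 0 = c ->
  cofinal T (fun i => f (rho i)) rho -> forall n, f (rho n) = rho n.
Proof.
  intros If Hc R R0 C. apply cofinal_rays_eq; auto.
  - apply isometry_ray; auto.
  - congruence.
Qed.

(* The image ray is cofinal with the ray from [f c] through [c] followed by [rho]. *)
Lemma moved_vertex_ray_turn f c rho : isometry f -> f c <> c -> is_ray T rho -> rho 0 = c ->
  cofinal T (fun i => f (rho i)) rho -> rho 1 <> toward c (f c) ->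
  f (rho 1) = toward (f c) c.
Proof.
  intros If Hc R R0 C Hn.
  assert (RX : is_ray T (prepend (f c) c rho)) by (apply prepend_ray; auto).
  rewrite <- (prepend_1 (f c) c rho) by auto.
  apply (cofinal_rays_eq _ _ (isometry_ray f rho If R) RX).
  - rewrite prepend_0, R0. auto.
  - apply (cofinal_trans _ rho); auto. apply cofinal_sym, prepend_cofinal; auto.
Qed.

(* If [f] moved [c], two of the three rays would leave [c] in a direction other than
   [toward c (f c)], and [moved_vertex_ray_turn] would force their second vertices to agree. *)
Lemma fixes_three_ends_fixes_vertex f c r1 r2 r3 : isometry f ->
  is_ray T r1 -> is_ray T r2 -> is_ray T r3 ->
  r1 0 = c -> r2 0 = c -> r3 0 = c -> r1 1 <> r2 1 -> r1 1 <> r3 1 -> r2 1 <> r3 1 ->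
  cofinal T (fun i => f (r1 i)) r1 -> cofinal T (fun i => f (r2 i)) r2 ->
  cofinal T (fun i => f (r3 i)) r3 -> f c = c.
Proof.
  intros If R1 R2 R3 E1 E2 E3 N12 N13 N23 C1 C2 C3. apply NNPP. intro Hc.
  set (a := toward c (f c)).
  assert (K : forall rho rho', is_ray T rho -> is_ray T rho' -> rho 0 = c -> rho' 0 = c ->
    cofinal T (fun i => f (rho i)) rho -> cofinal T (fun i => f (rho' i)) rho' ->
    rho 1 <> a -> rho' 1 <> a -> rho 1 = rho' 1).
  { intros rho rho' Ra Rb Ea Eb Ca Cb Na Nb. apply (isometry_inj f _ _ If).
    rewrite (moved_vertex_ray_turn f c rho), (moved_vertex_ray_turn f c rho'); auto. }
  destruct (classic (r1 1 = a)) as [Q1|Q1].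
  - apply N23. apply K; auto; intro; congruence.
  - destruct (classic (r2 1 = a)) as [Q2|Q2].
    + apply N13. apply K; auto; intro; congruence.
    + apply N12. apply K; auto.
Qed.

Section FullHull.

Hypothesis hull_all : forall v, hull v.

Lemma two_neighbours x : exists y1 y2, d x y1 = 1 /\ d x y2 = 1 /\ y1 <> y2.
Proof.
  destruct (hull_all x) as [b1 [b2 [B1 [B2 O]]]].
  destruct (classic (x = b1)) as [->|H1].
  { destruct B1 as [y1 [y2 [_ [? [? [_ [? _]]]]]]]. exists y1, y2; auto. }
  destruct (classic (x = b2)) as [->|H2].
  { destruct B2 as [y1 [y2 [_ [? [? [_ [? _]]]]]]]. exists y1, y2; auto. }
  destruct (toward_spec x b1 H1) as [A1 D1]. destruct (toward_spec x b2 H2) as [A2 D2].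
  exists (toward x b1), (toward x b2). repeat split; auto. intro E. unfold between in O.
  pose proof (d_triangle b1 (toward x b1) b2). rewrite E in H at 2. rewrite (d_sym b1 (toward x b1)) in H.
  rewrite (d_sym b1 x) in O. lia.
Qed.

Lemma other_neighbour x u : exists y, d x y = 1 /\ y <> u.
Proof.
  destruct (two_neighbours x) as [y1 [y2 [A1 [A2 N]]]].
  destruct (classic (y1 = u)) as [->|H]; [exists y2|exists y1]; auto.
Qed.

Lemma branching_beyond_edge sv rv : d sv rv = 1 -> exists c, branching c /\ d c rv < d c sv.
Proof.
  intros Hsr. destruct (hull_all rv) as [b1 [b2 [B1 [B2 O]]]]. unfold between in O.
  destruct (d_adjacent sv rv b1 Hsr) as [Q1|Q1]; [exists b1; rewrite !(d_sym b1); split; auto; lia|].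
  destruct (d_adjacent sv rv b2 Hsr) as [Q2|Q2]; [exists b2; rewrite !(d_sym b2); split; auto; lia|].
  exfalso. pose proof (d_triangle b1 sv b2). rewrite (d_sym rv b1) in Q1. rewrite (d_sym b1 sv) in H. lia.
Qed.

Lemma ray_through_edge x y : d x y = 1 -> exists rho, is_ray T rho /\ rho 0 = x /\ rho 1 = y.
Proof.
  intros Hxy.
  assert (step : forall u v, exists w, d u v = 1 -> d v w = 1 /\ w <> u).
  { intros u v. destruct (other_neighbour v u) as [w Hw]. exists w; auto. }
  set (nxt := fun u v => proj1_sig (constructive_indefinite_description _ (step u v))).
  assert (nxt_spec : forall u v, d u v = 1 -> d v (nxt u v) = 1 /\ nxt u v <> u).
  { intros u v H. unfold nxt. destruct (constructive_indefinite_description _ _); auto. }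
  set (sq := fix sq n := match n with 0 => (x, y) | S n => (snd (sq n), nxt (fst (sq n)) (snd (sq n))) end).
  assert (Inv : forall n, d (fst (sq n)) (snd (sq n)) = 1).
  { induction n; simpl; auto. apply nxt_spec; auto. }
  exists (fun n => fst (sq n)). split; [|split; reflexivity].
  apply nonbacktracking_ray. intro m. split; intros i _; simpl.
  - apply Inv.
  - apply not_eq_sym. apply nxt_spec. apply Inv.
Qed.

(* The direction from [c] towards [s e] passes through [b0] and leaves it through [nb],
   which points neither back to [c] nor towards [s e]. *)
Lemma ZB_ray_through_neighbour e b0 nb c m : Z0 e b0 -> d b0 nb = 1 ->
  nb <> toward b0 c -> nb <> toward b0 (s e) -> c <> b0 ->
  toward c b0 = toward c (s e) -> Z0 e c -> d c m = 1 ->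
  exists rho, is_ray T rho /\ rho 0 = c /\ rho 1 = m /\ inZB T e rho.
Proof.
  intros Zb Hnb Nc Ns Hcb Ecs Zc Hm. destruct (classic (m = toward c b0)) as [->|Hne].
  - destruct (ray_through_edge b0 nb Hnb) as [sig [Rs [S0 S1]]].
    assert (R : is_ray T (prepend c b0 sig)) by (apply prepend_ray; auto; right; congruence).
    exists (prepend c b0 sig). split; [exact R | split; [apply prepend_0 | split; [apply prepend_1; auto|]]].
    apply (inZB_of_cofinal e b0 sig); auto; [congruence | apply prepend_cofinal; auto].
  - destruct (ray_through_edge c m Hm) as [sig [Rs [S0 S1]]].
    exists sig. split; [exact Rs | split; [exact S0 | split; [exact S1|]]].
    apply (inZB_of_cofinal e c sig); auto; [congruence | apply cofinal_refl].
Qed.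

Lemma Z0_branching_ZB_star e : exists c, Z0 e c /\ branching c /\
  forall m, d c m = 1 -> exists rho, is_ray T rho /\ rho 0 = c /\ rho 1 = m /\ inZB T e rho.
Proof.
  destruct (branching_beyond_edge (s e) (r e) (d_src_rng e)) as [b0 [Bb Zb]].
  destruct (branching_avoid b0 (toward b0 (s e)) Bb) as [na [nb [Ha [Hb [Nab [Na Nb]]]]]].
  destruct (branching_beyond_edge b0 na Ha) as [c [Bc Hc]].
  assert (Hcb : c <> b0) by (intros ->; rewrite d_refl in Hc; lia).
  assert (Ebc : toward b0 c = na).
  { symmetry. apply toward_unique; auto. rewrite (d_sym c na), (d_sym c b0) in Hc.
    destruct (d_adjacent b0 na c Ha) as [Q|Q]; lia. }
  assert (Gl : d c (s e) = d c b0 + d b0 (s e)) by (apply d_through; congruence).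
  assert (Zc : Z0 e c).
  { unfold Z0 in *. pose proof (d_triangle c b0 (r e)). lia. }
  assert (Ecs : toward c b0 = toward c (s e)).
  { destruct (toward_spec c b0 Hcb) as [M1 M2]. apply toward_unique; auto.
    pose proof (d_triangle (toward c b0) b0 (s e)).
    destruct (d_adjacent c (toward c b0) (s e) M1); lia. }
  exists c. split; [exact Zc | split; [exact Bc|]].
  intros m Hm. apply (ZB_ray_through_neighbour e b0 nb c m); auto; congruence.
Qed.

Section IsometryFixingZB.

Variable e : Ex.
Variable f : Vx -> Vx.
Hypothesis f_iso : isometry f.
Hypothesis f_ZB : forall rho, is_ray T rho -> inZB T e rho -> cofinal T (fun i => f (rho i)) rho.

Lemma fixed_vertex_in_Z0 : exists c, Z0 e c /\ f c = c.
Proof.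
  destruct (Z0_branching_ZB_star e) as [c [Zc [[m1 [m2 [m3 [A1 [A2 [A3 [N1 [N2 N3]]]]]]]] Hrays]]].
  destruct (Hrays m1 A1) as [r1 [R1 [E1 [F1 Z1]]]].
  destruct (Hrays m2 A2) as [r2 [R2 [E2 [F2 Z2]]]].
  destruct (Hrays m3 A3) as [r3 [R3 [E3 [F3 Z3]]]].
  exists c. split; [exact Zc|].
  apply (fixes_three_ends_fixes_vertex f c r1 r2 r3); auto; congruence.
Qed.

(* A ray from [c] through [v] that then turns away from [c] leaves [v] in a direction
   other than [s e], so it represents a point of [Z_B e]; its end being fixed, it is
   fixed pointwise. *)
Lemma fixed_of_ZB_ray_away c v : f c = c -> Z0 e v -> v <> c ->
  toward v c = toward v (s e) -> f v = v.
Proof.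
  intros Hc Zv Hvc E.
  destruct (other_neighbour v (toward v c)) as [y [Hy Ny]].
  destruct (ray_through_edge v y Hy) as [sig [Rs [S0 S1]]].
  assert (R : is_ray T (prepend c v sig)) by (apply prepend_ray; auto; right; congruence).
  assert (Z : inZB T e (prepend c v sig)).
  { apply (inZB_of_cofinal e v sig); auto; [congruence | apply prepend_cofinal; auto]. }
  pose proof (fixed_ray_pointwise f c _ f_iso Hc R (prepend_0 c v sig) (f_ZB _ R Z) (d c v + 0)) as Fv.
  rewrite prepend_tail, S0 in Fv by auto. exact Fv.
Qed.

(* Let [w := toward v c], fixed by induction. Either [w] also points towards [s e] and
   [fixed_of_ZB_ray_away] applies, or [v] lies between [w] and [s e]; then a moved [v] would be
   sent to another neighbour [z] of [w], and [z] is fixed (closer to [c], or again covered by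
   [fixed_of_ZB_ray_away]), contradicting injectivity. *)
Lemma fixes_Z0_step c v : Z0 e c -> f c = c ->
  (forall u, Z0 e u -> d c u < d c v -> f u = u) -> Z0 e v -> f v = v.
Proof.
  intros Zc Hc IH Zv.
  destruct (classic (v = c)) as [->|Hvc]; [exact Hc|].
  destruct (toward_spec v c Hvc) as [Hvw Dw]. set (w := toward v c) in *.
  assert (Zw : Z0 e w) by (apply (Z0_closer e c v w); auto; lia).
  assert (Fw : f w = w) by (apply IH; [exact Zw | rewrite (d_sym c w), (d_sym c v); lia]).
  destruct (toward_or_back v w (s e) Hvw) as [Hw|Hv].
  { apply (fixed_of_ZB_ray_away c v); auto. }
  apply NNPP. intro Hfv. set (z := f v) in *.
  assert (Hwz : d w z = 1) by (unfold z; rewrite <- Fw, f_iso, d_sym; exact Hvw).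
  enough (Fz : f z = z) by (apply Hfv, (isometry_inj f _ _ f_iso); exact Fz).
  destruct (d_adjacent w z c Hwz) as [P|P].
  - apply IH; [apply (Z0_closer e c w z); auto; lia | rewrite (d_sym c z), (d_sym c v); lia].
  - destruct (Z0_away_from_src e w z Zw Hwz) as [Zz Hzw]; [congruence|].
    apply (fixed_of_ZB_ray_away c z); auto.
    + intros E. rewrite E, d_refl in P. lia.
    + rewrite Hzw. symmetry. apply toward_unique; [rewrite d_sym; exact Hwz | lia].
Qed.

Lemma isometry_fixing_ZB_fixes_Z0 v : Z0 e v -> f v = v.
Proof.
  destruct fixed_vertex_in_Z0 as [c [Zc Hc]].
  remember (d c v) as n eqn:Hn. revert v Hn.
  induction n as [n IH] using lt_wf_ind. intros v Hn Zv.
  apply (fixes_Z0_step c v Zc Hc); auto. intros u Zu Hu. apply (IH (d c u)); auto. lia.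
Qed.

End IsometryFixingZB.

End FullHull.

Section Action.

Variable Gm : group.
Variable A : action T Gm.

Notation act := (actV A).

Lemma actV_invl g v : act (inv Gm g) (act g v) = v.
Proof. rewrite <- actV_mul, mulVg, actV_one. reflexivity. Qed.

Lemma actV_invr g v : act g (act (inv Gm g) v) = v.
Proof. rewrite <- actV_mul, mulgV, actV_one. reflexivity. Qed.

Lemma actE_invr g e : actE A g (actE A (inv Gm g) e) = e.
Proof. rewrite <- actE_mul, mulgV, actE_one. reflexivity. Qed.

Lemma act_path g u l v : is_path T u l v -> is_path T (act g u) (map (actE A g) l) (act g v).
Proof.
  revert u; induction l as [|e l IH]; intros u H; simpl in *.
  - subst; auto.
  - destruct H as [H1 H2]. split. + rewrite act_src, H1; auto. + rewrite act_rng. auto.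
Qed.

Lemma d_act_le g u v : d (act g u) (act g v) <= d u v.
Proof.
  destruct (geodesic_exists u v) as [l [Hl [L _]]]. pose proof (d_le_length _ _ _ (act_path g _ _ _ Hl)).
  rewrite length_map in H. lia.
Qed.

Lemma isometry_act g : isometry (act g).
Proof.
  intros u v. apply Nat.le_antisymm. apply d_act_le.
  pose proof (d_act_le (inv Gm g) (act g u) (act g v)). rewrite !actV_invl in H. auto.
Qed.

Lemma hyp_inv h : hyperbolic A h -> hyperbolic A (inv Gm h).
Proof.
  intros [H1 H2]. split.
  - intros v E. apply (H1 v). rewrite <- E at 1. apply actV_invr.
  - intros e E. apply (H2 (bar T e)). rewrite bar_inv. rewrite <- E at 1. apply actE_invr.
Qed.

Lemma min_displacement_exists h : exists a, forall v, d a (act h a) <= d v (act h v).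
Proof.
  destruct HT as [[v0 _] _].
  destruct (ex_minimal_nat (fun n => exists v, d v (act h v) = n)) as [n [[a Ha] Hm]].
  { exists (d v0 (act h v0)), v0; auto. }
  exists a. intro v. rewrite Ha. apply Hm. eauto.
Qed.

Lemma displacement_pos h a : hyperbolic A h -> d a (act h a) >= 1.
Proof.
  intros [H1 _]. destruct (d a (act h a)) eqn:E; [|lia]. apply d_eq0 in E. exfalso. apply (H1 a). auto.
Qed.

(* Otherwise the second vertex of [[a, h a]] would be displaced less than [a]
   (or, at displacement 1, [h] would invert an edge). *)
Lemma min_displacement_no_fold h a : hyperbolic A h -> (forall v, d a (act h a) <= d v (act h v)) ->
  seg a (act h a) (d a (act h a) - 1) <> act h (seg a (act h a) 1).
Proof.
  intros Hh Hm E. pose proof (displacement_pos h a Hh) as Ht.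
  destruct (Nat.eq_dec (d a (act h a)) 1) as [H1|H1].
  - pose proof (seg_end a (act h a)) as GE. rewrite H1 in GE.
    replace (d a (act h a) - 1) with 0 in E by lia. rewrite GE in E. change (seg a (act h a) 0) with a in E.
    destruct (proj1 (d_eq1_edge _ _) H1) as [f [Hs Hr]].
    apply (proj2 Hh f). apply edge_unique.
    + rewrite act_src, src_bar, Hs, Hr. reflexivity.
    + rewrite act_rng, rng_bar, Hr, Hs. auto.
  - specialize (Hm (seg a (act h a) 1)). rewrite <- E in Hm.
    rewrite d_seg in Hm; lia.
Qed.

Lemma hyperbolic_axis h : hyperbolic A h -> exists F G, is_ray T F /\ is_ray T G /\ F 0 = G 0 /\ F 1 <> G 1 /\
  cofinal T (fun i => act h (F i)) F /\ cofinal T (fun i => act h (G i)) G.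
Proof.
  intro Hh. destruct (min_displacement_exists h) as [a Ha].
  pose proof (hyp_inv h Hh) as Hh'.
  assert (Dinv : forall v, d v (act (inv Gm h) v) = d v (act h v)).
  { intro v. rewrite <- (isometry_act h v), actV_invr. apply d_sym. }
  assert (Ha' : forall v, d a (act (inv Gm h) a) <= d v (act (inv Gm h) v)).
  { intro v. rewrite !Dinv. auto. }
  destruct (translation_ray (act h) a (isometry_act h) (displacement_pos h a Hh) (min_displacement_no_fold h a Hh Ha)) as [F [RF [F0 [F1 Fe]]]].
  destruct (translation_ray (act (inv Gm h)) a (isometry_act _) (displacement_pos _ a Hh') (min_displacement_no_fold _ a Hh' Ha')) as [G [RG [G0 [G1 Ge]]]].
  exists F, G. split; [auto|split; [auto|split; [congruence|split]]].
  - rewrite F1, G1. intro E. apply (min_displacement_no_fold h a Hh Ha).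
    assert (Hne : a <> act h a) by (intro E'; pose proof (displacement_pos h a Hh); rewrite <- E', d_refl in H; lia).
    rewrite seg_last, seg_1 by auto. symmetry. apply toward_unique.
    + rewrite isometry_act. apply toward_spec. auto.
    + assert (Hne' : a <> act (inv Gm h) a).
      { intro E'. pose proof (displacement_pos _ a Hh'). rewrite <- E', d_refl in H. lia. }
      rewrite E.
      assert (X: d (act h (toward a (act (inv Gm h) a))) a = d (toward a (act (inv Gm h) a)) (act (inv Gm h) a)).
      { rewrite <- (isometry_act h _ (act (inv Gm h) a)), actV_invr. reflexivity. }
      rewrite X. destruct (toward_spec _ _ Hne') as [_ B]. rewrite B, Dinv, d_sym. reflexivity.
  - split.
    + exists 0, (d a (act h a)). intro i. rewrite Nat.add_0_r. apply Fe.
    + exists (d a (act h a)), 0. intro i. rewrite Nat.add_0_r. rewrite <- Dinv, <- Ge, actV_invr. reflexivity.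
Qed.

Lemma not_degree_le2 h1 h2 : hyperbolic A h1 -> hyperbolic A h2 ->
  (forall x : point T, ~ (fixes A h1 x /\ fixes A h2 x)) -> ~ degree_le2.
Proof.
  intros H1 H2 Hno HD.
  destruct (hyperbolic_axis h1 H1) as [F [G [RF [RG [E0 [E1 [CF CG]]]]]]].
  destruct (hyperbolic_axis h2 H2) as [F' [_ [RF' [_ [_ [_ [CF' _]]]]]]].
  assert (C : cofinal T F' F \/ cofinal T F' G).
  { destruct (line_cover HD F G RF RG E0 E1 (d (F 0) (F' 0)) (F' 0) eq_refl) as [Q|Q].
    - eapply line_two_ends; eauto.
    - destruct (line_two_ends HD G F F' (d (F 0) (F' 0)) RG RF (eq_sym E0) (not_eq_sym E1) RF' Q); auto. }
  apply (Hno (PB T F' RF')). simpl. split; auto.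
  destruct C as [C|C].
  - apply (cofinal_trans _ (fun i => act h1 (F i))). apply cofinal_map; auto.
    apply (cofinal_trans _ F); auto. apply cofinal_sym; auto.
  - apply (cofinal_trans _ (fun i => act h1 (G i))). apply cofinal_map; auto.
    apply (cofinal_trans _ G); auto. apply cofinal_sym; auto.
Qed.

Lemma branching_exists : strongly_hyperbolic A -> exists x, branching x.
Proof.
  intros [h1 [h2 [H1 [H2 Hno]]]]. apply NNPP. intro Hn. apply (not_degree_le2 h1 h2 H1 H2 Hno).
  intros x y1 y2 y3 A1 A2 A3. apply NNPP. intro Q. apply Hn. exists x, y1, y2, y3.
  repeat split; auto; intro; apply Q; auto.
Qed.

Lemma hull_full : minimal A -> strongly_hyperbolic A -> forall v, hull v.
Proof.
  intros Hmin Hsh. apply Hmin.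
  - destruct (branching_exists Hsh) as [x Hx]. exists x, x, x. repeat split; auto.
    unfold between. rewrite d_refl. lia.
  - exact hull_connected.
  - intros g v. apply hull_isometry, isometry_act.
Qed.

Lemma fixes_Z0_fixes_ZB e g : fixes_Z0 A e g -> fixes_ZB A e g.
Proof.
  intros Hg rho h [rho' [R' [C [j [Ej Ej1]]]]]. simpl.
  assert (Fix : forall n, act g (rho' (n + S j)) = rho' (n + S j)).
  { intro n. apply (Hg (rho' (n + S j))). apply inZ0_iff_Z0. unfold Z0.
    rewrite is_ray_d in R'. pose proof (R' j (n + 1)) as D1. pose proof (R' (S j) n) as D2.
    rewrite Ej in D1. rewrite Ej1 in D2.
    replace (j + (n + 1)) with (n + S j) in D1 by lia. replace (S j + n) with (n + S j) in D2 by lia.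
    rewrite (d_sym (rho' (n + S j))), (d_sym (rho' (n + S j))). lia. }
  apply (cofinal_trans _ (fun i => act g (rho' i))); [apply cofinal_map; auto|].
  apply (cofinal_trans _ rho'); [exists (S j), (S j); intro i; apply Fix | apply cofinal_sym; auto].
Qed.

Lemma fixes_ZB_fixes_Z0 e g : minimal A -> strongly_hyperbolic A -> fixes_ZB A e g -> fixes_Z0 A e g.
Proof.
  intros Hmin Hsh Hg v Hv.
  apply (isometry_fixing_ZB_fixes_Z0 (hull_full Hmin Hsh) e (act g) (isometry_act g) Hg).
  apply inZ0_iff_Z0; auto.
Qed.

Lemma fixes_ZB_fixes_Z e g : minimal A -> strongly_hyperbolic A -> fixes_ZB A e g -> fixes_Z A e g.
Proof.
  intros Hmin Hsh Hg [v|rho h] Hx.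
  - exact (fixes_ZB_fixes_Z0 e g Hmin Hsh Hg v Hx).
  - exact (Hg rho h Hx).
Qed.

End Action.

End Tree.

Lemma boundary_in_closure (T : graph) rho (h : is_ray T rho) : in_closure_boundary (PB T rho h).
Proof. intros l Hl. exists rho, h. exact Hl. Qed.

Theorem mainTheorem9 (T : graph) (HT : is_tree T) (Gm : group) (A : action T Gm)
  (Hmin : minimal A) (Hsh : strongly_hyperbolic A) (e : E T) :
  (forall g : G Gm, fixes_ZB A e g -> fixes_Z A e g) /\
  (forall g : G Gm, fixes_Z0 A e g <-> fixes_ZB A e g) /\
  (forall g : G Gm, fixes_ZB A e g <-> fixes_Z_cl A e g).
Proof.
  pose proof (fixes_ZB_fixes_Z T HT Gm A e) as HZ.
  split; [|split]; intro g.
  - exact (HZ g Hmin Hsh).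
  - split.
    + exact (fixes_Z0_fixes_ZB T HT Gm A e g).
    + exact (fixes_ZB_fixes_Z0 T HT Gm A e g Hmin Hsh).
  - split.
    + intros Hg x Hx _. exact (HZ g Hmin Hsh Hg x Hx).
    + intros Hg rho h Hr. exact (Hg (PB T rho h) Hr (boundary_in_closure T rho h)).
Qed.
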